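(* Let $G=G_2$ and $K=SU(3)\subseteq G_2$. For $X,Y\in\mathfrak p\subseteq\mathfrak g_2$, $[X,Y]=0$ if and only if $[X,Y]_{\mathfrak k}=0$.
   Context: $G_2=\operatorname{Aut}(\mathbb{O})\subseteq SO(7)$ is the automorphism group of the octonions acting on $\operatorname{Im}\mathbb{O}$, and $K=\{g\in G_2: g(i)=i\}\cong SU(3)$ for a fixed unit imaginary octonion $i$. Let $\mathfrak g=\mathfrak g_2$ and $\mathfrak k$ be their Lie algebras, $\langle X,Y\rangle_0=-\operatorname{tr}(XY)$, $\mathfrak p$ the $\langle\cdot,\cdot\rangle_0$-orthogonal complement of $\mathfrak k$ in $\mathfrak g$, and $X=X_{\mathfrak k}+X_{\mathfrak p}$ the corresponding decomposition. *)

From HB Require Import structures.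
From mathcomp Require Import all_boot all_order all_algebra.
Set Implicit Arguments. Unset Strict Implicit. Unset Printing Implicit Defensive.
Import Order.TTheory GRing.Theory Num.Theory.
Local Open Scope ring_scope.

(* Im O = R^7 with orthonormal basis e_0..e_6 (0-indexed version of the
   standard octonion units e1..e7).  Multiplication table (Fano plane):
   e_i e_j = e_k for the oriented triples below and their cyclic rotations;
   for imaginary u v:  u v = - <u,v> 1 + u x v  with the cross product x. *)
Definition fano_triples : seq (nat * nat * nat) :=
  [:: (0,1,2); (0,3,4); (0,6,5); (1,3,5); (1,4,6); (2,3,6); (2,5,4)]%N.

Definition fano_pos (i j k : nat) : bool :=
  has (fun t => (t == (i,j,k)) || (t == (j,k,i)) || (t == (k,i,j))) fano_triples.

Definition oct_eps {R : ringType} (i j k : 'I_7) : R :=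
  if fano_pos i j k then 1 else if fano_pos j i k then -1 else 0.

Definition cross {R : ringType} (u v : 'cV[R]_7) : 'cV[R]_7 :=
  \col_k (\sum_(i < 7) \sum_(j < 7) oct_eps i j k * u i 0 * v j 0).

Definition oct_i {R : ringType} : 'cV[R]_7 := delta_mx 0 0.

(* g2 = Lie algebra of G2 = Aut(O) acting on Im O: skew endomorphisms of Im O
   (i.e. elements of so(7)) that are derivations of the octonion product,
   equivalently of the cross product on Im O. *)
Definition in_g2 {R : ringType} (X : 'M[R]_7) : Prop :=
  X^T = - X /\
  forall u v : 'cV[R]_7, X *m cross u v = cross (X *m u) v + cross u (X *m v).

(* k = Lie algebra of K = stabilizer of i in G2 (= su(3)) *)
Definition in_k {R : ringType} (X : 'M[R]_7) : Prop :=
  in_g2 X /\ X *m oct_i = 0.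

Definition ip0 {R : ringType} (X Y : 'M[R]_7) : R := - \tr (X *m Y).

Definition in_p {R : ringType} (X : 'M[R]_7) : Prop :=
  in_g2 X /\ forall W, in_k W -> ip0 X W = 0.

Definition lie {R : ringType} (X Y : 'M[R]_7) : 'M[R]_7 := X *m Y - Y *m X.

(* "Z_k = 0" for the decomposition Z = Z_k + Z_p, Z_k in k, Z_p in p. *)
Definition kcomp_zero {R : ringType} (Z : 'M[R]_7) : Prop :=
  forall A B : 'M[R]_7, in_k A -> in_p B -> Z = A + B -> A = 0.

From HB Require Import structures.
From mathcomp Require Import all_boot all_order all_algebra.
From mathcomp Require Import ring lra.
Import GRing.Theory Num.Theory.
Local Open Scope ring_scope.

Set Implicit Arguments. Unset Strict Implicit. Unset Printing Implicit Defensive.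

(* An element of p is determined by its first column w = X i, which lies in
   the orthogonal complement of i, and p_proj below is the projection onto p
   along k.  For X, Y in p with first columns w and v, every entry of [X, Y] is
   a linear combination of the Plucker coordinates a_rs = w_r v_s - w_s v_r.
   If [X, Y]_k = 0, i.e. [X, Y] lies in p, these coordinates satisfy a linear
   system; inserted into the quadratic Plucker relations, it turns three of
   them into sums of squares, which forces all a_rs and hence [X, Y] to vanish.
   Conversely k and p meet trivially because -tr(XY) is positive definite on
   skew-symmetric matrices. *)

Definition o0 : 'I_7 := @Ordinal 7 0 isT.
Definition o1 : 'I_7 := @Ordinal 7 1 isT.
Definition o2 : 'I_7 := @Ordinal 7 2 isT.
Definition o3 : 'I_7 := @Ordinal 7 3 isT.
Definition o4 : 'I_7 := @Ordinal 7 4 isT.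
Definition o5 : 'I_7 := @Ordinal 7 5 isT.
Definition o6 : 'I_7 := @Ordinal 7 6 isT.

Lemma ord7P (i : 'I_7) :
  i = o0 \/ i = o1 \/ i = o2 \/ i = o3 \/ i = o4 \/ i = o5 \/ i = o6.
Proof.
case: i => [[|[|[|[|[|[|[|k]]]]]]] Hk] //.
all: do ?[by left; apply: val_inj | right].
by apply: val_inj.
Qed.

Ltac case_ord7 i := case: (ord7P i) => [->|[->|[->|[->|[->|[->|->]]]]]].

Lemma ord0_7 : (0 : 'I_7) = o0.
Proof. exact: val_inj. Qed.

Lemma big_ord7 (V : nmodType) (F : 'I_7 -> V) :
  \sum_(i < 7) F i = F o0 + F o1 + F o2 + F o3 + F o4 + F o5 + F o6.
Proof.
rewrite !big_ord_recr big_ord0 /= add0r.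
by repeat congr (_ + _); congr F; apply: val_inj.
Qed.

Lemma cross0l (R : nzRingType) (u : 'cV[R]_7) : cross 0 u = 0.
Proof.
apply/matrixP => k l; rewrite !mxE big1 // => i _.
by rewrite big1 // => j _; rewrite !mxE mulr0 mul0r.
Qed.

Lemma crossBl (R : nzRingType) (u1 u2 v : 'cV[R]_7) :
  cross (u1 - u2) v = cross u1 v - cross u2 v.
Proof.
apply/matrixP => k l; rewrite !mxE -sumrB; apply: eq_bigr => i _.
by rewrite -sumrB; apply: eq_bigr => j _; rewrite !mxE mulrBr mulrBl.
Qed.

Lemma crossBr (R : nzRingType) (u v1 v2 : 'cV[R]_7) :
  cross u (v1 - v2) = cross u v1 - cross u v2.
Proof.
apply/matrixP => k l; rewrite !mxE -sumrB; apply: eq_bigr => i _.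
by rewrite -sumrB; apply: eq_bigr => j _; rewrite !mxE mulrBr.
Qed.

Definition cross_coord {R : nzRingType} (u v : 'I_7 -> R) (k : nat) : R :=
  match k with
  | 0 => (u o1 * v o2 - u o2 * v o1) + (u o3 * v o4 - u o4 * v o3) - (u o5 * v o6 - u o6 * v o5)
  | 1 => -(u o0 * v o2 - u o2 * v o0) + (u o3 * v o5 - u o5 * v o3) + (u o4 * v o6 - u o6 * v o4)
  | 2 => (u o0 * v o1 - u o1 * v o0) + (u o3 * v o6 - u o6 * v o3) - (u o4 * v o5 - u o5 * v o4)
  | 3 => -(u o0 * v o4 - u o4 * v o0) - (u o1 * v o5 - u o5 * v o1) - (u o2 * v o6 - u o6 * v o2)
  | 4 => (u o0 * v o3 - u o3 * v o0) - (u o1 * v o6 - u o6 * v o1) + (u o2 * v o5 - u o5 * v o2)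
  | 5 => (u o0 * v o6 - u o6 * v o0) + (u o1 * v o3 - u o3 * v o1) - (u o2 * v o4 - u o4 * v o2)
  | _ => -(u o0 * v o5 - u o5 * v o0) + (u o1 * v o4 - u o4 * v o1) + (u o2 * v o3 - u o3 * v o2)
  end.

Lemma crossE (R : comNzRingType) (u v : 'cV[R]_7) (k : 'I_7) :
  cross u v k 0 = cross_coord (fun i => u i 0) (fun i => v i 0) k.
Proof. by rewrite mxE !big_ord7 /oct_eps; case_ord7 k => /=; ring. Qed.

Lemma mulmx_oct_i (R : nzRingType) (X : 'M[R]_7) (i : 'I_7) :
  (X *m oct_i) i 0 = X i o0.
Proof. by rewrite -colE mxE ord0_7. Qed.

Lemma in_g2B (R : comNzRingType) (X Y : 'M[R]_7) :
  in_g2 X -> in_g2 Y -> in_g2 (X - Y).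
Proof.
move=> [sX dX] [sY dY]; split; first by rewrite linearB /= sX sY opprD.
move=> u v; rewrite !mulmxBl dX dY crossBl crossBr opprD !addrA; congr (_ + _).
by rewrite -!addrA; congr (_ + _); rewrite addrC.
Qed.

Lemma in_g2_lie (R : comNzRingType) (X Y : 'M[R]_7) :
  in_g2 X -> in_g2 Y -> in_g2 (lie X Y).
Proof.
move=> [sX dX] [sY dY]; split.
  by rewrite /lie linearB /= !trmx_mul sX sY !mulNmx !mulmxN !opprK opprB.
move=> u v; rewrite /lie !mulmxBl -!mulmxA dY dX !mulmxDr !dX !dY crossBl crossBr.
repeat (let c := fresh "c" in set c := cross _ _; clearbody c).
by apply/matrixP => i j; rewrite !mxE; ring.
Qed.

Lemma k_mulmx_cross_oct_i (R : nzRingType) (W : 'M[R]_7) (u : 'cV[R]_7) :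
  in_k W -> W *m cross oct_i u = cross oct_i (W *m u).
Proof. by case=> [[_ derW] Wi]; rewrite derW Wi cross0l add0r. Qed.

(* The entries X_4j (0 < j < 4), X_5j (j < 5) and X_6j (j < 6) are coordinates
   on g2, and g2_proj X is the element of g2 with the coordinates of X. *)
Definition g2_proj_entry {R : nzRingType} (X : 'M[R]_7) (i j : nat) : R :=
  match i, j with
  | 0, 1 => - X o5 o4 + X o6 o3 | 0, 2 => - X o5 o3 - X o6 o4 | 0, 3 => X o5 o2 - X o6 o1
  | 0, 4 => X o5 o1 + X o6 o2 | 0, 5 => - X o5 o0 | 0, 6 => - X o6 o0
  | 1, 0 => X o5 o4 - X o6 o3 | 1, 2 => X o4 o3 - X o6 o5 | 1, 3 => - X o4 o2 + X o6 o0
  | 1, 4 => - X o4 o1 | 1, 5 => - X o5 o1 | 1, 6 => - X o6 o1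
  | 2, 0 => X o5 o3 + X o6 o4 | 2, 1 => - X o4 o3 + X o6 o5 | 2, 3 => X o4 o1 - X o5 o0
  | 2, 4 => - X o4 o2 | 2, 5 => - X o5 o2 | 2, 6 => - X o6 o2
  | 3, 0 => - X o5 o2 + X o6 o1 | 3, 1 => X o4 o2 - X o6 o0 | 3, 2 => - X o4 o1 + X o5 o0
  | 3, 4 => - X o4 o3 | 3, 5 => - X o5 o3 | 3, 6 => - X o6 o3
  | 4, 0 => - X o5 o1 - X o6 o2 | 4, 1 => X o4 o1 | 4, 2 => X o4 o2 | 4, 3 => X o4 o3
  | 4, 5 => - X o5 o4 | 4, 6 => - X o6 o4
  | 5, 0 => X o5 o0 | 5, 1 => X o5 o1 | 5, 2 => X o5 o2 | 5, 3 => X o5 o3 | 5, 4 => X o5 o4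
  | 5, 6 => - X o6 o5
  | 6, 0 => X o6 o0 | 6, 1 => X o6 o1 | 6, 2 => X o6 o2 | 6, 3 => X o6 o3 | 6, 4 => X o6 o4
  | 6, 5 => X o6 o5
  | _, _ => 0
  end.

Definition g2_proj {R : nzRingType} (X : 'M[R]_7) : 'M[R]_7 :=
  \matrix_(i, j) g2_proj_entry X i j.

Lemma g2_proj_skew (R : nzRingType) (X : 'M[R]_7) : (g2_proj X)^T = - g2_proj X.
Proof.
apply/matrixP => i j; rewrite !mxE.
by case_ord7 i; case_ord7 j; rewrite /= ?(opprK, oppr0, opprD).
Qed.

Lemma g2_proj_der (R : comNzRingType) (X : 'M[R]_7) (u v : 'cV[R]_7) :
  g2_proj X *m cross u v = cross (g2_proj X *m u) v + cross u (g2_proj X *m v).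
Proof.
apply/matrixP => i j; rewrite ord1 [LHS]mxE big_ord7 !crossE [RHS]mxE !crossE.
by case_ord7 i; rewrite /= !mxE !big_ord7 !mxE /=; ring.
Qed.

Lemma in_g2_proj (R : comNzRingType) (X : 'M[R]_7) : in_g2 (g2_proj X).
Proof. by split; [exact: g2_proj_skew | exact: g2_proj_der]. Qed.

(* The element of p whose first column is that of X with its 0-th entry
   replaced by 0. *)
Definition p_proj_entry {R : fieldType} (X : 'M[R]_7) (i j : nat) : R :=
  let w1 := X o1 o0 in let w2 := X o2 o0 in let w3 := X o3 o0 in
  let w4 := X o4 o0 in let w5 := X o5 o0 in let w6 := X o6 o0 in
  match i, j with
  | 0, 1 => - w1 | 0, 2 => - w2 | 0, 3 => - w3 | 0, 4 => - w4 | 0, 5 => - w5 | 0, 6 => - w6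
  | 1, 0 => w1 | 1, 3 => w6 / 2 | 1, 4 => - (w5 / 2) | 1, 5 => w4 / 2 | 1, 6 => - (w3 / 2)
  | 2, 0 => w2 | 2, 3 => - (w5 / 2) | 2, 4 => - (w6 / 2) | 2, 5 => w3 / 2 | 2, 6 => w4 / 2
  | 3, 0 => w3 | 3, 1 => - (w6 / 2) | 3, 2 => w5 / 2 | 3, 5 => - (w2 / 2) | 3, 6 => w1 / 2
  | 4, 0 => w4 | 4, 1 => w5 / 2 | 4, 2 => w6 / 2 | 4, 5 => - (w1 / 2) | 4, 6 => - (w2 / 2)
  | 5, 0 => w5 | 5, 1 => - (w4 / 2) | 5, 2 => - (w3 / 2) | 5, 3 => w2 / 2 | 5, 4 => w1 / 2
  | 6, 0 => w6 | 6, 1 => w3 / 2 | 6, 2 => - (w4 / 2) | 6, 3 => - (w1 / 2) | 6, 4 => w2 / 2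
  | _, _ => 0
  end.

Definition p_proj {R : fieldType} (X : 'M[R]_7) : 'M[R]_7 :=
  \matrix_(i, j) p_proj_entry X i j.

Lemma g2_proj_p_proj (R : realFieldType) (X : 'M[R]_7) : g2_proj (p_proj X) = p_proj X.
Proof.
apply/matrixP => i j; rewrite !mxE.
by case_ord7 i; case_ord7 j; rewrite /= ?mxE /=; lra.
Qed.

Lemma in_g2_p_proj (R : realFieldType) (X : 'M[R]_7) : in_g2 (p_proj X).
Proof. by rewrite -g2_proj_p_proj; exact: in_g2_proj. Qed.

(* W commutes with the complex structure u |-> i x u on the complement of i
   (the relations r_ below), whereas the 6x6 block of p_proj X anticommutes
   with it; hence the trace of their product vanishes. *)
Lemma mxtrace_p_proj_mul_k (R : realFieldType) (X W : 'M[R]_7) :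
  in_k W -> \tr (p_proj X *m W) = 0.
Proof.
move=> kW; have [[skW _] Wi] := kW.
have sk i j : W i j = - W j i by have /matrixP/(_ j i) := skW; rewrite !mxE.
have col0 i : W i o0 = 0 by rewrite -mulmx_oct_i Wi mxE.
have row0 j : W o0 j = 0 by rewrite sk col0 oppr0.
have comm c k := congr1 (fun v : 'cV_7 => v k 0) (k_mulmx_cross_oct_i (delta_mx c 0) kW).
move: (comm o1 o6) (comm o1 o5) (comm o3 o6) (comm o3 o5) (comm o1 o4) (comm o1 o3).
rewrite -!colE /= !(crossE, mxE, big_ord7) /oct_i ord0_7 /= !mxE /= => c16 c15 c36 c35 c14 c13.
have r24 : W o2 o4 = W o1 o3 by rewrite (sk o2 o4) (sk o1 o3); lra.
have r23 : W o2 o3 = - W o1 o4 by rewrite (sk o2 o3) (sk o1 o4); lra.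
have r26 : W o2 o6 = - W o1 o5 by rewrite (sk o2 o6) (sk o1 o5); lra.
have r25 : W o2 o5 = W o1 o6 by rewrite (sk o2 o5) (sk o1 o6); lra.
have r46 : W o4 o6 = - W o3 o5 by rewrite (sk o4 o6) (sk o3 o5); lra.
have r45 : W o4 o5 = W o3 o6 by rewrite (sk o4 o5) (sk o3 o6); lra.
rewrite /mxtrace big_ord7 !mxE !big_ord7 !mxE /= !col0 !row0.
rewrite (sk o2 o1) (sk o3 o1) (sk o4 o1) (sk o5 o1) (sk o6 o1) (sk o3 o2) (sk o4 o2).
rewrite (sk o5 o2) (sk o6 o2) (sk o4 o3) (sk o5 o3) (sk o6 o3) (sk o5 o4) (sk o6 o4).
by rewrite (sk o6 o5) r24 r23 r26 r25 r46 r45; ring.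
Qed.

Lemma skew_tr_mul_self_eq0 (R : realDomainType) n (D : 'M[R]_n) :
  D^T = - D -> \tr (D *m D) = 0 -> D = 0.
Proof.
move=> skD trD0; apply/matrixP => i j; rewrite mxE.
have sumD : \sum_k \sum_l D k l ^+ 2 = - \tr (D *m D).
  rewrite /mxtrace -sumrN; apply: eq_bigr => k _.
  rewrite mxE -sumrN; apply: eq_bigr => l _.
  by have /matrixP/(_ k l) := skD; rewrite !mxE => ->; rewrite mulrN opprK expr2.
move: sumD; rewrite trD0 oppr0.
move=> /psumr_eq0P/(_ i isT)-/(_ (fun k _ => sumr_ge0 _ (fun l _ => sqr_ge0 (D k l)))).
move=> /psumr_eq0P/(_ j isT)-/(_ (fun l _ => sqr_ge0 (D i l))).
by move/eqP; rewrite sqrf_eq0 => /eqP.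
Qed.

Lemma in_k_sub_p_proj (R : realFieldType) (Z : 'M[R]_7) : in_g2 Z -> in_k (Z - p_proj Z).
Proof.
move=> gZ; split; first exact: in_g2B gZ (in_g2_p_proj Z).
have /matrixP/(_ o0 o0) := gZ.1; rewrite !mxE => Z00.
apply/matrixP => i j; rewrite ord1 mulmx_oct_i !mxE.
by case_ord7 i; rewrite /=; lra.
Qed.

Lemma in_p_p_proj (R : realFieldType) (X : 'M[R]_7) : in_p (p_proj X).
Proof.
split=> [|W kW]; first exact: in_g2_p_proj.
by rewrite /ip0 mxtrace_p_proj_mul_k ?oppr0.
Qed.

Lemma p_proj_in_p (R : realFieldType) (X : 'M[R]_7) : in_p X -> p_proj X = X.
Proof.
move=> [gX pX]; have kD := in_k_sub_p_proj gX.
apply/eqP; rewrite eq_sym -subr_eq0; apply/eqP.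
apply: skew_tr_mul_self_eq0; first exact: kD.1.1.
have := pX _ kD; have := (in_p_p_proj X).2 _ kD.
by rewrite /ip0 mulmxBl raddfB /=; lra.
Qed.

Lemma sqr3_eq0 (R : realDomainType) (x y z : R) :
  x ^+ 2 + y ^+ 2 + z ^+ 2 = 0 -> [/\ x = 0, y = 0 & z = 0].
Proof. by move=> h; split; nra. Qed.

Lemma lie_p_proj_eq0 (R : realFieldType) (X Y : 'M[R]_7) :
  p_proj (lie (p_proj X) (p_proj Y)) = lie (p_proj X) (p_proj Y) ->
  lie (p_proj X) (p_proj Y) = 0.
Proof.
move=> /matrixP inpL.
pose a i j := X i o0 * Y j o0 - X j o0 * Y i o0.
move: (inpL o1 o2) (inpL o3 o4) (inpL o5 o6) (inpL o1 o3) (inpL o1 o4).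
move: (inpL o1 o5) (inpL o1 o6) (inpL o3 o5) (inpL o3 o6).
rewrite /lie !mxE /= !(mxE, big_ord7) /= => e15 e16 e35 e36 e12 e34 e56 e13 e14.
have a34 : a o3 o4 = a o1 o2 by rewrite /a; lra.
have a56 : a o5 o6 = - a o1 o2 by rewrite /a; lra.
have a24 : a o2 o4 = - a o1 o3 by rewrite /a; lra.
have a23 : a o2 o3 = a o1 o4 by rewrite /a; lra.
have a26 : a o2 o6 = a o1 o5 by rewrite /a; lra.
have a25 : a o2 o5 = - a o1 o6 by rewrite /a; lra.
have a46 : a o4 o6 = a o3 o5 by rewrite /a; lra.
have a45 : a o4 o5 = - a o3 o6 by rewrite /a; lra.
have [z12 z13 z14] : [/\ a o1 o2 = 0, a o1 o3 = 0 & a o1 o4 = 0].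
  have pl : a o1 o2 * a o3 o4 - a o1 o3 * a o2 o4 + a o1 o4 * a o2 o3 = 0.
    by rewrite /a; ring.
  by apply: sqr3_eq0; rewrite -[RHS]pl a34 a24 a23; ring.
have [_ z15 z16] : [/\ a o1 o2 = 0, a o1 o5 = 0 & a o1 o6 = 0].
  have pl : a o1 o2 * a o5 o6 - a o1 o5 * a o2 o6 + a o1 o6 * a o2 o5 = 0.
    by rewrite /a; ring.
  by apply: sqr3_eq0; rewrite -[RHS]oppr0 -pl a56 a26 a25; ring.
have [_ z35 z36] : [/\ a o1 o2 = 0, a o3 o5 = 0 & a o3 o6 = 0].
  have pl : a o3 o4 * a o5 o6 - a o3 o5 * a o4 o6 + a o3 o6 * a o4 o5 = 0.
    by rewrite /a; ring.
  by apply: sqr3_eq0; rewrite -[RHS]oppr0 -pl a34 a56 a46 a45; ring.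
move: z12 z13 z14 z15 z16 z35 z36 a34 a56 a24 a23 a26 a25 a46 a45; rewrite /a.
clear inpL e12 e34 e56 e13 e14 e15 e16 e35 e36 => *.
apply/matrixP => i j; rewrite /lie !mxE !big_ord7 !mxE.
by case_ord7 i; case_ord7 j; rewrite /=; lra.
Qed.

Theorem mainTheorem7 (R : rcfType) (X Y : 'M[R]_7) :
  in_p X -> in_p Y -> (lie X Y = 0 <-> kcomp_zero (lie X Y)).
Proof.
move=> pX pY; split=> [-> A B kA pB /esym/eqP | kL].
  rewrite addrC addr_eq0 => /eqP eBA.
  apply: skew_tr_mul_self_eq0 kA.1.1 _.
  by have := pB.2 _ kA; rewrite eBA /ip0 mulNmx raddfN opprK.
have gL := in_g2_lie pX.1 pY.1.
have /eqP := kL _ _ (in_k_sub_p_proj gL) (in_p_p_proj (lie X Y)) (esym (subrK _ _)).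
rewrite subr_eq0 => /eqP/esym.
rewrite -(p_proj_in_p pX) -(p_proj_in_p pY).
exact: lie_p_proj_eq0.
Qed.
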